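(* Let $A\in\mathbb{R}^{m\times n}$ be semi-monotone, and let $A=P_1-R_1+S_1=P_2-R_2+S_2$ be two double proper regular (respectively, two double proper weak regular) splittings of $A$. Suppose $N(S_2)\supseteq N(P_2)$, $R(S_2)\subseteq R(P_2)$, $1\notin\sigma(S_2P_1^{\dagger})$, and $\widehat{A}^{\dagger}\geq 0$, where $\widehat{A}=(I-S_2P_1^{\dagger})A$. Then $\rho(W_{12})<1$, where $$W_{12}=\begin{pmatrix} P_2^{\dagger}R_2-P_2^{\dagger}S_2P_1^{\dagger}R_1 & P_2^{\dagger}S_2P_1^{\dagger}S_1\\ I & 0\end{pmatrix}\in\mathbb{R}^{2n\times 2n}.$$
   Context: For $M\in\mathbb{R}^{m\times n}$, $M^{\dagger}$ is its Moore–Penrose inverse, $R(M)$ and $N(M)$ its range and null space; inequalities between matrices are entrywise; $\rho$ is the spectral radius and $\sigma$ the set of eigenvalues; $I$ is the $n\times n$ (or $m\times m$, as appropriate) identity. $A$ is semi-monotone if $A^{\dagger}\geq 0$. A double splitting $A=P-R+S$ (with $P,R,S\in\mathbb{R}^{m\times n}$) is a double proper splitting if $R(P)=R(A)$ and $N(P)=N(A)$; it is a double proper regular splitting if moreover $P^{\dagger}\geq 0$, $R\geq 0$, $S\leq 0$; a double proper weak regular splitting if moreover $P^{\dagger}\geq 0$, $P^{\dagger}R\geq 0$, $P^{\dagger}S\leq 0$. *)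

(* Real matrices over an abstract real closed field R;
   eigenvalues are taken in the algebraic closure R[i] = complex R. *)
From HB Require Import structures.
From mathcomp Require Import all_boot all_order all_algebra.
From mathcomp Require Import complex.
Set Implicit Arguments. Unset Strict Implicit. Unset Printing Implicit Defensive.
Import Order.TTheory GRing.Theory Num.Theory.
Local Open Scope ring_scope.

Section Defs.
Variable R : rcfType.

Definition is_MP_inverse (m n : nat) (A : 'M[R]_(m, n)) (X : 'M[R]_(n, m)) : Prop :=
  [/\ A *m X *m A = A, X *m A *m X = X,
      (A *m X)^T = A *m X & (X *m A)^T = X *m A].

Definition mx_nonneg (m n : nat) (M : 'M[R]_(m, n)) : Prop := forall i j, 0 <= M i j.
Definition mx_nonpos (m n : nat) (M : 'M[R]_(m, n)) : Prop := forall i j, M i j <= 0.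

Definition in_range (m n : nat) (M : 'M[R]_(m, n)) (y : 'cV[R]_m) : Prop :=
  exists x : 'cV[R]_n, y = M *m x.
Definition in_null (m n : nat) (M : 'M[R]_(m, n)) (x : 'cV[R]_n) : Prop :=
  M *m x = 0.

Definition cmx (n : nat) (M : 'M[R]_n) : 'M[R[i]]_n := map_mx (real_complex R) M.

Definition spectrum (n : nat) (M : 'M[R]_n) : pred R[i] :=
  fun z => eigenvalue (cmx M) z.

Definition eigen_seq (n : nat) (M : 'M[R]_n) : seq R[i] :=
  sval (closed_field_poly_normal (char_poly (cmx M))).

(* spectral radius: max of |lambda| over the eigenvalues (a real number,
   living in R[i] as the norm of a complex number) *)
Definition spectral_radius (n : nat) (M : 'M[R]_n) : R[i] :=
  \big[Num.max/0]_(z <- eigen_seq M) `|z|.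

End Defs.

Definition double_proper_splitting (R : rcfType) (m n : nat)
  (A P Rm S : 'M[R]_(m, n)) : Prop :=
  [/\ A = P - Rm + S,
      (forall y, in_range P y <-> in_range A y) &
      (forall x, in_null P x <-> in_null A x)].

Definition dp_regular (R : rcfType) (m n : nat)
  (A P Rm S : 'M[R]_(m, n)) (Pd : 'M[R]_(n, m)) : Prop :=
  [/\ double_proper_splitting A P Rm S, is_MP_inverse P Pd,
      mx_nonneg Pd, mx_nonneg Rm & mx_nonpos S].

Definition dp_weak_regular (R : rcfType) (m n : nat)
  (A P Rm S : 'M[R]_(m, n)) (Pd : 'M[R]_(n, m)) : Prop :=
  [/\ double_proper_splitting A P Rm S, is_MP_inverse P Pd,
      mx_nonneg Pd, mx_nonneg (Pd *m Rm) & mx_nonpos (Pd *m S)].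

(* W12 is entrywise nonnegative, so if rho(W12) >= 1 the moduli of an
   eigenvector for an eigenvalue of modulus >= 1 form a nonzero vector
   u >= 0 with u <= W12 u.  For the block companion shape of W12 this
   means v <= T v with v >= 0, v <> 0, where T = X + Y is the sum of the
   two upper blocks.  Expanding the splittings gives T = P2^+ (P2 - Ahat),
   and the Moore-Penrose equations give Ahat^+ = P2^+ + T Ahat^+.  Then
   a := Ahat^+ |(P2 - Ahat) v| >= 0 satisfies a >= v + T a, and comparing a
   with the largest multiple t v below it contradicts v <= T v. *)

From HB Require Import structures.
From mathcomp Require Import all_boot all_order all_algebra.
From mathcomp Require Import complex.
Set Implicit Arguments. Unset Strict Implicit. Unset Printing Implicit Defensive.
Import Order.TTheory GRing.Theory Num.Theory.
Local Open Scope ring_scope.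

Section NonnegMatrices.
Variable R : rcfType.

Lemma mx_nonnegN m n (M : 'M[R]_(m, n)) : mx_nonneg (- M) <-> mx_nonpos M.
Proof. by split=> M0 i j; [move: (M0 i j) |]; rewrite mxE oppr_ge0. Qed.

Lemma addmx_nonneg m n (M N : 'M[R]_(m, n)) :
  mx_nonneg M -> mx_nonneg N -> mx_nonneg (M + N).
Proof. by move=> M0 N0 i j; rewrite mxE addr_ge0. Qed.

Lemma mulmx_nonneg m n p (M : 'M[R]_(m, n)) (N : 'M[R]_(n, p)) :
  mx_nonneg M -> mx_nonneg N -> mx_nonneg (M *m N).
Proof. by move=> M0 N0 i j; rewrite mxE; apply: sumr_ge0 => k _; apply: mulr_ge0. Qed.

Lemma mulmx_le m n p (M : 'M[R]_(m, n)) (N1 N2 : 'M[R]_(n, p)) :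
  mx_nonneg M -> (forall i j, N1 i j <= N2 i j) ->
  forall i j, (M *m N1) i j <= (M *m N2) i j.
Proof. by move=> M0 N12 i j; rewrite !mxE; apply: ler_sum => k _; apply: ler_wpM2l. Qed.

Lemma block_mx_nonneg m1 m2 n1 n2 (Aul : 'M[R]_(m1, n1)) (Aur : 'M[R]_(m1, n2))
    (Adl : 'M[R]_(m2, n1)) (Adr : 'M[R]_(m2, n2)) :
  mx_nonneg Aul -> mx_nonneg Aur -> mx_nonneg Adl -> mx_nonneg Adr ->
  mx_nonneg (block_mx Aul Aur Adl Adr).
Proof.
move=> ul0 ur0 dl0 dr0 i j; rewrite -(splitK i) -(splitK j).
case: (split i) => i'; case: (split j) => j' /=.
- by rewrite block_mxEul.
- by rewrite block_mxEur.
- by rewrite block_mxEdl.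
- by rewrite block_mxEdr.
Qed.

Lemma cV_min_ratio n (u a : 'cV[R]_n) :
  mx_nonneg u -> mx_nonneg a -> u != 0 ->
  exists2 i, 0 < u i 0 & forall j, a i 0 / u i 0 * u j 0 <= a j 0.
Proof.
move=> u0 a0 /eqP u_neq0.
have [k uk_gt0|u_le0] := pickP (fun k => 0 < u k 0); last first.
  case: u_neq0; apply/matrixP => i j; rewrite ord1 mxE.
  by apply/eqP; rewrite eq_le u0 andbT leNgt u_le0.
have [i ui_gt0 min_i] :=
  @arg_minP _ _ _ k (fun j => 0 < u j 0) (fun j => a j 0 / u j 0) uk_gt0.
exists i => // j; have [uj_gt0|uj_le0] := boolP (0 < u j 0).
  by rewrite -ler_pdivlMr //; apply: min_i.
by move: uj_le0; rewrite lt_def u0 andbT negbK => /eqP ->; rewrite mulr0.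
Qed.

(* R need not be archimedean, so instead of summing the Neumann series of
   T we compare a with its extremal ratio to u. *)
Lemma nonneg_subinvariant_eq0 m n (T : 'M[R]_n) (Pd Qd : 'M[R]_(n, m))
    (V : 'M[R]_(m, n)) (u : 'cV[R]_n) :
  mx_nonneg T -> mx_nonneg Pd -> mx_nonneg Qd ->
  T = Pd *m V -> Qd = Pd + T *m Qd ->
  mx_nonneg u -> (forall i, u i 0 <= (T *m u) i 0) -> u = 0.
Proof.
move=> T0 Pd0 Qd0 DT DQd u0 Tu.
pose c : 'cV_m := \col_j `|(V *m u) j 0|.
have c0 : mx_nonneg c by move=> j k; rewrite mxE normr_ge0.
pose a := Qd *m c.
have a0 : mx_nonneg a := mulmx_nonneg Qd0 c0.
have Da : a = Pd *m c + T *m a by rewrite /a {1}DQd mulmxDl mulmxA.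
have u_le_Pdc i : u i 0 <= (Pd *m c) i 0.
  apply: le_trans (Tu i) _; rewrite DT -mulmxA.
  by apply: mulmx_le => // j k; rewrite ord1 [c _ _]mxE ler_norm.
apply/eqP/negPn/negP => /(cV_min_ratio u0 a0) [i ui_gt0].
set t := a i 0 / u i 0 => tu_le_a.
have t0 : 0 <= t by rewrite divr_ge0 // ltW.
have tu_le_Ta : t * u i 0 <= (T *m a) i 0.
  apply: le_trans (_ : (T *m (t *: u)) i 0 <= _).
    by rewrite -scalemxAr mxE ler_wpM2l.
  by apply: mulmx_le => // j k; rewrite ord1 mxE tu_le_a.
have : u i 0 + t * u i 0 <= a i 0 by rewrite Da mxE lerD.
by rewrite /t divfK ?gt_eqF // gerDr leNgt ui_gt0.
Qed.

End NonnegMatrices.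

Lemma char_poly_trmx (F : comNzRingType) n (M : 'M[F]_n) :
  char_poly M^T = char_poly M.
Proof.
rewrite /char_poly /char_poly_mx -det_tr; congr (\det _).
by rewrite raddfB /= tr_scalar_mx map_trmx trmxK.
Qed.

Section SpectralRadius.
Variable R : rcfType.

Lemma eigen_seq_eigenvector n (M : 'M[R]_n) z :
  z \in eigen_seq M -> exists2 x : 'cV_n, x != 0 & cmx M *m x = z *: x.
Proof.
rewrite /eigen_seq; case: closed_field_poly_normal => r /= Dr.
rewrite (monicP (char_poly_monic _)) scale1r in Dr.
rewrite -root_prod_XsubC -Dr -char_poly_trmx -eigenvalue_root_char.
case/eigenvalueP=> v Dv v_neq0; exists v^T; first by rewrite trmx_eq0.
by rewrite -[cmx M]trmxK -trmx_mul Dv linearZ.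
Qed.

Lemma unitmx_1B n (M : 'M[R]_n) : ~~ spectrum M 1 -> 1%:M - M \in unitmx.
Proof.
move=> not_eig1; rewrite unitmxE unitfE; apply: contra not_eig1 => /det0P [v v_neq0].
rewrite mulmxBr mulmx1 => /eqP; rewrite subr_eq0 => /eqP vM.
apply/eigenvalueP; exists (map_mx (real_complex R) v); last by rewrite map_mx_eq0.
by rewrite /cmx -map_mxM -vM scale1r.
Qed.

Lemma nonneg_spectral_radius_lt1 n (W : 'M[R]_n) :
  mx_nonneg W ->
  (forall u : 'cV_n, mx_nonneg u -> (forall i, u i 0 <= (W *m u) i 0) -> u = 0) ->
  spectral_radius W < 1.
Proof.
move=> W0 noW; rewrite /spectral_radius big_seq.
elim/big_ind: _ => [|x y x1 y1|z /eigen_seq_eigenvector [x x_neq0 Dx]].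
- exact: ltr01.
- by rewrite /Num.max /Order.max; case: ifP.
rewrite real_ltNge ?real1 ?normr_real //; apply/negP => z_ge1.
have normxE i : ((complex.Re `|x i 0|)%:C = `|x i 0|)%C.
  by rewrite RRe_real ?normr_real.
pose u : 'cV[R]_n := \col_i complex.Re `|x i 0|.
suff u0 : u = 0.
  case/eqP: x_neq0; apply/matrixP => i j; rewrite ord1 mxE; apply/normr0_eq0.
  by rewrite -normxE; have := congr1 (fun v : 'cV_n => v i 0) u0; rewrite !mxE => ->.
apply: noW => [i j|i]; first by rewrite ord1 mxE -lecR normxE normr_ge0.
rewrite -lecR; have -> : ((W *m u) i 0)%:C%C = \sum_j (W i j)%:C%C * `|x j 0|.
  by rewrite mxE rmorph_sum; apply: eq_bigr => j _; rewrite rmorphM /= mxE normxE.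
rewrite mxE normxE; apply: le_trans (ler_peMl (normr_ge0 _) z_ge1) _.
rewrite -normrM; have -> : z * x i 0 = (cmx W *m x) i 0 by rewrite Dx mxE.
rewrite mxE; apply: le_trans (ler_norm_sum _ _ _) _; apply: ler_sum => j _.
by rewrite normrM mxE ger0_norm // ler0c.
Qed.

Lemma companion_spectral_radius_lt1 n (X Y : 'M[R]_n) :
  mx_nonneg X -> mx_nonneg Y ->
  (forall v : 'cV_n, mx_nonneg v -> (forall i, v i 0 <= ((X + Y) *m v) i 0) -> v = 0) ->
  spectral_radius (block_mx X Y 1%:M 0) < 1.
Proof.
move=> X0 Y0 noXY; apply: nonneg_spectral_radius_lt1 => [|u u0].
  by apply: block_mx_nonneg => // i j; rewrite mxE ?ler0n.
rewrite -[u]vsubmxK mul_block_col mul1mx mul0mx addr0 in u0 *.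
move: (usubmx u) (dsubmx u) u0 => v w vw0 Wvw.
have v0 : mx_nonneg v by move=> i j; rewrite ord1 -(col_mxEu _ w) vw0.
have w0 : mx_nonneg w by move=> i j; rewrite ord1 -(col_mxEd v) vw0.
have w_le_v i : w i 0 <= v i 0 by have := Wvw (rshift n i); rewrite !col_mxEd.
have v_eq0 : v = 0.
  apply: noXY => // i; have := Wvw (lshift n i); rewrite !col_mxEu => /le_trans.
  apply; rewrite mulmxDl [leRHS]mxE [leLHS]mxE lerD2l.
  by apply: mulmx_le => // j k; rewrite ord1.
have w_eq0 : w = 0.
  apply/matrixP => i j; rewrite ord1 mxE; apply/eqP.
  by rewrite eq_le w0 andbT; have := w_le_v i; rewrite v_eq0 mxE.
by rewrite v_eq0 w_eq0 col_mx0.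
Qed.

End SpectralRadius.

Section MoorePenrose.
Variable R : rcfType.

Lemma MP_inverse_trmx m n (B : 'M[R]_(m, n)) Bd :
  is_MP_inverse B Bd -> is_MP_inverse B^T Bd^T.
Proof.
case=> BBdB BdBBd BBd_sym BdB_sym.
by split; rewrite -!trmx_mul ?mulmxA ?BBdB ?BdBBd ?trmxK // -mulmxA ?BBd_sym ?BdB_sym.
Qed.

Lemma MP_inverse_projl m n (B : 'M[R]_(m, n)) Bd (E : 'M[R]_n) :
  is_MP_inverse B Bd -> E^T = E -> B *m E = B -> E *m Bd = Bd.
Proof.
case=> _ BdBBd _ BdB_sym E_sym BE.
have EBt : E *m B^T = B^T by rewrite -E_sym -trmx_mul BE.
by rewrite -BdBBd -BdB_sym trmx_mul !mulmxA EBt.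
Qed.

Lemma MP_inverse_projr m n (B : 'M[R]_(m, n)) Bd (E : 'M[R]_m) :
  is_MP_inverse B Bd -> E^T = E -> E *m B = B -> Bd *m E = Bd.
Proof.
move=> /MP_inverse_trmx MPt E_sym EB; apply: trmx_inj.
by rewrite trmx_mul E_sym (MP_inverse_projl MPt) // -E_sym -trmx_mul EB.
Qed.

Lemma MP_inverse_fixpoint m n (P Q : 'M[R]_(m, n)) (Pd Qd : 'M[R]_(n, m)) :
  is_MP_inverse P Pd -> is_MP_inverse Q Qd ->
  Q *m Pd *m P = Q -> Q *m Qd *m P = P -> Qd = Pd + Pd *m (P - Q) *m Qd.
Proof.
move=> MP_P MP_Q QPdP QQdP; have [_ _ _ PdP_sym] := MP_P; have [_ _ QQd_sym _] := MP_Q.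
have PdPQd : Pd *m P *m Qd = Qd.
  by apply: (MP_inverse_projl MP_Q) => //; rewrite mulmxA.
have PdQQd : Pd *m (Q *m Qd) = Pd by apply: (MP_inverse_projr MP_P).
by rewrite mulmxBr mulmxBl PdPQd -mulmxA PdQQd addrC subrK.
Qed.

Lemma eq_mx_delta_col m n (A B : 'M[R]_(m, n)) :
  (forall j, A *m delta_mx j (0 : 'I_1) = B *m delta_mx j 0) -> A = B.
Proof.
move=> AB; apply/matrixP => i j.
by have := congr1 (fun v : 'cV_m => v i 0) (AB j); rewrite -!colE !mxE.
Qed.

Lemma null_sub_mulmx0 k l n p (P : 'M[R]_(k, n)) (C : 'M[R]_(l, n)) (M : 'M[R]_(n, p)) :
  (forall x, in_null P x -> in_null C x) -> P *m M = 0 -> C *m M = 0.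
Proof.
move=> PC PM; apply: eq_mx_delta_col => j; rewrite mul0mx -mulmxA.
by apply: PC; rewrite /in_null mulmxA PM mul0mx.
Qed.

Lemma null_sub_mulmx_ginv k l n (P : 'M[R]_(k, n)) (C : 'M[R]_(l, n)) G :
  (forall x, in_null P x -> in_null C x) -> P *m G *m P = P -> C *m G *m P = C.
Proof.
move=> PC PGP; apply/eqP; rewrite -subr_eq0 -{2}[C]mulmx1 -mulmxA -mulmxBr.
by apply/eqP/(null_sub_mulmx0 PC); rewrite mulmxBr mulmx1 mulmxA PGP subrr.
Qed.

Lemma range_sub_mulmx_ginv k l n (B : 'M[R]_(k, n)) (C : 'M[R]_(k, l)) G :
  (forall y, in_range C y -> in_range B y) -> B *m G *m B = B -> B *m G *m C = C.
Proof.
move=> CB BGB; apply: eq_mx_delta_col => j.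
have [x Dx] := CB (C *m delta_mx j 0) (ex_intro _ _ erefl).
by rewrite -mulmxA Dx mulmxA BGB.
Qed.

Lemma range_sub_1B_mulmx m n (A S : 'M[R]_(m, n)) (G : 'M[R]_(n, m)) :
  (forall y, in_range S y -> in_range A y) -> 1%:M - S *m G \in unitmx ->
  forall y, in_range A y -> in_range ((1%:M - S *m G) *m A) y.
Proof.
move=> SA unitM _ [x ->]; set M := 1%:M - S *m G.
pose z := invmx M *m (A *m x).
have Mz : M *m z = A *m x by rewrite mulKVmx.
have Dz : z = A *m x + S *m (G *m z) by rewrite -Mz mulmxBl mul1mx mulmxA subrK.
have [w Dw] := SA _ (ex_intro _ (G *m z) erefl).
by exists (x + w); rewrite -mulmxA mulmxDr -Dw -Dz Mz.
Qed.

End MoorePenrose.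

Section Splittings.
Variables (R : rcfType) (m n : nat).

Lemma dp_regular_weak (A P Rm S : 'M[R]_(m, n)) Pd :
  dp_regular A P Rm S Pd -> dp_weak_regular A P Rm S Pd.
Proof.
case=> split_P MP Pd0 Rm0 /mx_nonnegN S_le0; split=> //; first exact: mulmx_nonneg.
by apply/mx_nonnegN; rewrite -mulmxN; apply: mulmx_nonneg.
Qed.

Lemma double_splitting_subE (A P Rm S : 'M[R]_(m, n)) :
  A = P - Rm + S -> Rm - S = P - A.
Proof. by move->; rewrite -addrA opprD addNKr opprD opprK addrC. Qed.

Lemma W12_blocks_nonneg (R1 S1 R2 S2 : 'M[R]_(m, n)) (P1d P2d : 'M[R]_(n, m)) :
  mx_nonneg (P1d *m R1) -> mx_nonpos (P1d *m S1) ->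
  mx_nonneg (P2d *m R2) -> mx_nonpos (P2d *m S2) ->
  mx_nonneg (P2d *m R2 - P2d *m S2 *m P1d *m R1) /\
  mx_nonneg (P2d *m S2 *m P1d *m S1).
Proof.
move=> P1dR1 /mx_nonnegN P1dS1 P2dR2 /mx_nonnegN P2dS2.
split; first by rewrite -mulmxA -mulNmx; apply/addmx_nonneg/mulmx_nonneg.
by rewrite -mulmxA -[_ *m _]opprK -mulNmx -mulmxN; apply: mulmx_nonneg.
Qed.

Lemma W12_blocks_sum (A P1 R1 S1 P2 R2 S2 : 'M[R]_(m, n)) (P1d P2d : 'M[R]_(n, m)) :
  A = P1 - R1 + S1 -> A = P2 - R2 + S2 -> S2 *m P1d *m P1 = S2 ->
  P2d *m R2 - P2d *m S2 *m P1d *m R1 + P2d *m S2 *m P1d *m S1 =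
  P2d *m (P2 - (1%:M - S2 *m P1d) *m A).
Proof.
move=> /double_splitting_subE R1S1 /double_splitting_subE R2S2 S2P1dP1.
rewrite -!mulmxA -!mulmxBr -mulmxDr; congr (_ *m _).
rewrite -addrA [- _ + _]addrC -!mulmxBr -opprB R1S1 opprB !mulmxBr !mulmxA S2P1dP1.
by rewrite addrA addrAC R2S2 mulmxBl mul1mx opprB -addrA (addrC (- A)).
Qed.

End Splittings.

Theorem theorem3p1 (R : rcfType) (m n : nat)
  (A P1 R1 S1 P2 R2 S2 : 'M[R]_(m, n))
  (Ad P1d P2d : 'M[R]_(n, m)) (Ahatd : 'M[R]_(n, m)) :
  is_MP_inverse A Ad -> mx_nonneg Ad ->
  is_MP_inverse P1 P1d -> is_MP_inverse P2 P2d ->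
  ((dp_regular A P1 R1 S1 P1d /\ dp_regular A P2 R2 S2 P2d) \/
   (dp_weak_regular A P1 R1 S1 P1d /\ dp_weak_regular A P2 R2 S2 P2d)) ->
  (forall x, in_null P2 x -> in_null S2 x) ->
  (forall y, in_range S2 y -> in_range P2 y) ->
  ~~ spectrum (S2 *m P1d) 1 ->
  is_MP_inverse ((1%:M - S2 *m P1d) *m A) Ahatd -> mx_nonneg Ahatd ->
  spectral_radius
    (block_mx (P2d *m R2 - P2d *m S2 *m P1d *m R1) (P2d *m S2 *m P1d *m S1)
              (1%:M : 'M[R]_n) 0) < 1.
Proof.
move=> _ _ MP1 MP2 splittings nS2 rS2 not_eig1 MPhat Ahatd0.
have [[[DA1 _ nP1] _ _ P1dR1 P1dS1] [[DA2 rP2 nP2] _ P2d0 P2dR2 P2dS2]] :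
    dp_weak_regular A P1 R1 S1 P1d /\ dp_weak_regular A P2 R2 S2 P2d.
  by case: splittings => [[/dp_regular_weak ? /dp_regular_weak ?]|].
have [X0 Y0] := W12_blocks_nonneg P1dR1 P1dS1 P2dR2 P2dS2.
have S2P1dP1 : S2 *m P1d *m P1 = S2.
  by case: MP1 => P1P1dP1 _ _ _; apply: null_sub_mulmx_ginv P1P1dP1 => x /nP1/nP2/nS2.
have DXY := W12_blocks_sum P2d DA1 DA2 S2P1dP1.
set Ahat := (1%:M - S2 *m P1d) *m A in MPhat DXY *.
have AhatP2dP2 : Ahat *m P2d *m P2 = Ahat.
  case: MP2 => P2P2dP2 _ _ _; apply: null_sub_mulmx_ginv P2P2dP2 => x /nP2 Ax0.
  by rewrite /in_null -mulmxA Ax0 mulmx0.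
have AhatAhatdP2 : Ahat *m Ahatd *m P2 = P2.
  have S2A y : in_range S2 y -> in_range A y by move/rS2/rP2.
  case: MPhat => AhatAhatdAhat _ _ _; apply: range_sub_mulmx_ginv AhatAhatdAhat => y.
  by move/rP2; apply: range_sub_1B_mulmx S2A (unitmx_1B not_eig1) y.
apply: companion_spectral_radius_lt1 => // v.
apply: (nonneg_subinvariant_eq0 _ P2d0 Ahatd0 DXY); first exact: addmx_nonneg.
by rewrite DXY; apply: MP_inverse_fixpoint.
Qed.
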